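(* Let $G$ and $H$ be finite graphs. Then \[ n(G)\,\gamma(H)-m(G)\;\le\; \gamma_{\rm S}(G,H)\;\le\; \Gamma_{\rm S}(G,H)\;\le\; n(G)\,\gamma(H), \] where $n(G)=|V(G)|$ and $m(G)=|E(G)|$.
   Context: All graphs are finite and simple; $\gamma(X)$ denotes the domination number of a graph $X$ (the minimum size of a set $S$ of vertices such that every vertex is in $S$ or adjacent to a vertex of $S$). For graphs $G,H$ and a function $f\colon V(G)\to V(H)$, the Sierpiński product $G\otimes_f H$ is the graph with vertex set $V(G)\times V(H)$ and edges of two types: (type 1) $(g,h)(g,h')$ for every $g\in V(G)$ and every edge $hh'\in E(H)$; (type 2) $(g,f(g'))(g',f(g))$ for every edge $gg'\in E(G)$. The Sierpiński domination number is $\gamma_{\rm S}(G,H)=\min_{f}\gamma(G\otimes_f H)$ and the upper Sierpiński domination number is $\Gamma_{\rm S}(G,H)=\max_{f}\gamma(G\otimes_f H)$, where $f$ ranges over all functions $V(G)\to V(H)$. *)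

From mathcomp Require Import all_boot.
Set Implicit Arguments. Unset Strict Implicit. Unset Printing Implicit Defensive.

Definition simple_graph (T : finType) (e : rel T) : Prop :=
  symmetric e /\ irreflexive e.

(* n(G) = |V(G)| is #|T|; m(G) = number of (unordered) edges *)
Definition edge_set (T : finType) (e : rel T) : {set {set T}} :=
  [set E : {set T} | [exists x, exists y, e x y && (E == [set x; y])]].

Definition num_edges (T : finType) (e : rel T) : nat := #|edge_set e|.

Definition dominating (T : finType) (e : rel T) (S : {set T}) : bool :=
  [forall v, (v \in S) || [exists u in S, e u v]].

(* domination number: minimum size of a dominating set (setT is always
   dominating, so the default #|T| is attained and this is the true minimum) *)
Definition domination_number (T : finType) (e : rel T) : nat :=
  \big[minn/#|T|]_(S : {set T} | dominating e S) #|S|.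

Definition sierpinski_rel (TG TH : finType) (eG : rel TG) (eH : rel TH)
    (f : TG -> TH) : rel (TG * TH) :=
  fun x y => ((x.1 == y.1) && eH x.2 y.2)
          || [&& eG x.1 y.1, x.2 == f y.1 & y.2 == f x.1].

(* The fold default n(G)*n(H) is an
   upper bound on every term (gamma <= number of vertices), so when the set of
   functions f is nonempty (V(H) nonempty) this is exactly the minimum. *)
Definition sierpinski_domination (TG TH : finType) (eG : rel TG) (eH : rel TH)
  : nat :=
  \big[minn/#|TG| * #|TH|]_(f : {ffun TG -> TH})
     domination_number (sierpinski_rel eG eH f).

Definition upper_sierpinski_domination (TG TH : finType) (eG : rel TG)
  (eH : rel TH) : nat :=
  \max_(f : {ffun TG -> TH}) domination_number (sierpinski_rel eG eH f).

From mathcomp Require Import all_boot.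
Set Implicit Arguments. Unset Strict Implicit.

(* Upper bound: if D is a minimum dominating set of H, then V(G) x D dominates
   every Sierpinski product G (x)_f H through the type-1 edges inside each
   copy {g} x V(H), so gamma(G (x)_f H) <= n(G) gamma(H) for every f.

   Lower bound: let S dominate G (x)_f H and call a pair (g, g') of adjacent
   vertices of G deficient when (g', f g) is in S but (g, f g') is not.  In
   the copy of H indexed by g, the fibre S_g together with the vertices
   f g' for deficient pairs (g, g') dominates H: a vertex (g, h) outside S is
   dominated either inside its copy or by a type-2 edge from (g', f g), and
   then h = f g'.  Summing over g gives n(G) gamma(H) <= |S| + #deficient,
   and distinct deficient pairs span distinct edges, so #deficient <= m(G).

   The middle inequality compares a minimum and a maximum over the same
   nonempty family of functions f (nonempty because V(H) is nonempty). *)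

Lemma bigminn_le (I : finType) (P : pred I) (F : I -> nat) d j :
  P j -> \big[minn/d]_(i | P i) F i <= F j.
Proof.
move=> Pj; have : j \in index_enum I by rewrite mem_index_enum.
elim: (index_enum I) => [//|a s IHs]; rewrite inE big_cons.
case/orP => [/eqP <-|/IHs le_j]; first by rewrite Pj geq_minl.
by case: (P a) => //; apply: leq_trans (geq_minr _ _) le_j.
Qed.

Lemma bigminn_geq (I : finType) (P : pred I) (F : I -> nat) d c :
  c <= d -> (forall i, P i -> c <= F i) -> c <= \big[minn/d]_(i | P i) F i.
Proof.
move=> c_le_d c_le_F.
by apply: (big_ind (leq c)) => // x y cx cy; rewrite leq_min cx.
Qed.

Section Domination.
Variables (T : finType) (e : rel T).

Lemma dominating_setT : dominating e [set: T].
Proof. by apply/forallP => v; rewrite in_setT. Qed.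

Lemma domination_number_le S : dominating e S -> domination_number e <= #|S|.
Proof. exact: bigminn_le. Qed.

Lemma domination_number_le_card : domination_number e <= #|T|.
Proof. by rewrite -cardsT domination_number_le // dominating_setT. Qed.

Lemma domination_number_attained :
  exists2 S, dominating e S & #|S| = domination_number e.
Proof.
apply: (big_ind (fun n => exists2 S, dominating e S & #|S| = n)).
- by exists [set: T]; rewrite ?cardsT ?dominating_setT.
- move=> _ _ [S domS <-] [S' domS' <-].
  by case: (leqP #|S| #|S'|) => _; [exists S | exists S'].
- by move=> S domS; exists S.
Qed.

End Domination.

Lemma card_fibres (T1 T2 : finType) (A : {set T1 * T2}) :
  #|A| = \sum_(x : T1) #|[set y | (x, y) \in A]|.
Proof.
have fibre x : #|[set y | (x, y) \in A]| = \sum_y (if (x, y) \in A then 1 else 0).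
  by rewrite -sum1dep_card big_mkcond.
rewrite (eq_bigr _ (fun x _ => fibre x)) pair_bigA -sum1_card big_mkcond.
by apply: eq_bigr => -[x y].
Qed.

Section SierpinskiProduct.
Variables (TG TH : finType) (eG : rel TG) (eH : rel TH) (f : TG -> TH).
Local Notation eS := (sierpinski_rel eG eH f).

Lemma dominating_layers D :
  dominating eH D -> dominating eS (setX [set: TG] D).
Proof.
move=> /forallP domD; apply/forallP => -[g h].
have /orP [hD | /existsP [u /andP [uD euh]]] := domD h.
  by rewrite !inE hD.
apply/orP; right; apply/existsP; exists (g, u).
by rewrite !inE uD /sierpinski_rel /= eqxx euh.
Qed.

Lemma sierpinski_domination_number_le :
  domination_number eS <= #|TG| * domination_number eH.
Proof.
have [D domD <-] := domination_number_attained eH.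
by rewrite -cardsT -cardsX domination_number_le // dominating_layers.
Qed.

Definition deficient_pairs (S : {set TG * TH}) : {set TG * TG} :=
  [set p | [&& eG p.1 p.2, (p.2, f p.1) \in S & (p.1, f p.2) \notin S]].

(* The two orientations of an edge cannot both be deficient, so deficient
   pairs inject into the edges of G. *)
Lemma card_deficient_pairs S :
  irreflexive eG -> #|deficient_pairs S| <= num_edges eG.
Proof.
move=> irrG.
have edge_inj : {in deficient_pairs S &, injective (fun p => [set p.1; p.2])}.
  move=> [a b] [c d]; rewrite !inE /= => /and3P [ab inS _] /and3P [_ _ notinS] eq_ab.
  have : a \in [set c; d] by rewrite -eq_ab set21.
  have : b \in [set c; d] by rewrite -eq_ab set22.
  rewrite !inE => /orP [/eqP bc | /eqP bd] /orP [/eqP ac | /eqP ad]; subst => //.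
  - by rewrite irrG in ab.
  - by rewrite inS in notinS.
  - by rewrite irrG in ab.
rewrite /num_edges -(card_in_imset edge_inj); apply/subset_leq_card/subsetP.
move=> E /imsetP [[a b]]; rewrite inE => /and3P [ab _ _] ->; rewrite inE.
by apply/existsP; exists a; apply/existsP; exists b; rewrite ab eqxx.
Qed.

Lemma fibre_dominating S g :
  symmetric eG -> dominating eS S ->
  dominating eH ([set h | (g, h) \in S]
                 :|: f @: [set g' | (g, g') \in deficient_pairs S]).
Proof.
move=> symG /forallP domS; apply/forallP => h.
have /orP [inS | /existsP [[u1 u2] /andP [uS]]] := domS (g, h).
  by rewrite !inE inS.
rewrite /sierpinski_rel /= => /orP [/andP [/eqP <- e12] | /and3P [eu /eqP hf /eqP u2f]].
  by apply/orP; right; apply/existsP; exists u2; rewrite e12 !inE uS.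
subst h u2; case: (boolP ((g, f u1) \in S)) => [gS | gNS].
  by rewrite !inE gS.
rewrite in_setU; apply/orP; left; apply/orP; right.
by apply/imsetP; exists u1 => //; rewrite !inE /= symG eu uS gNS.
Qed.

Lemma sierpinski_domination_number_ge :
  simple_graph eG ->
  #|TG| * domination_number eH <= domination_number eS + num_edges eG.
Proof.
case=> symG irrG; have [S domS <-] := domination_number_attained eS.
set P := deficient_pairs S.
have fibre_bound g : domination_number eH
    <= #|[set h | (g, h) \in S]| + #|[set g' | (g, g') \in P]|.
  apply: leq_trans (domination_number_le (fibre_dominating g symG domS)) _.
  by apply: leq_trans (leq_card_setU _ _) _; rewrite leq_add2l leq_imset_card.
have := @leq_sum _ (index_enum TG) xpredT _ _ (fun g _ => fibre_bound g).
rewrite sum_nat_const big_split /= -!card_fibres => /leq_trans -> //.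
by rewrite leq_add2l card_deficient_pairs.
Qed.

End SierpinskiProduct.

Theorem theorem2p1 (TG TH : finType) (eG : rel TG) (eH : rel TH) :
  simple_graph eG -> simple_graph eH -> 0 < #|TH| ->
  [/\ #|TG| * domination_number eH - num_edges eG
        <= sierpinski_domination eG eH,
      sierpinski_domination eG eH <= upper_sierpinski_domination eG eH
    & upper_sierpinski_domination eG eH <= #|TG| * domination_number eH].
Proof.
move=> simpleG _ /card_gt0P [h0 _]; split.
- apply: bigminn_geq => [|f _].
    by rewrite (leq_trans (leq_subr _ _)) // leq_mul2l domination_number_le_card orbT.
  by rewrite leq_subLR addnC sierpinski_domination_number_ge.
- apply: (@leq_trans (domination_number (sierpinski_rel eG eH [ffun=> h0]))).
    exact: bigminn_le.
  exact: leq_bigmax.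
- by apply/bigmax_leqP => f _; exact: sierpinski_domination_number_le.
Qed.
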